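(* Let $n\ge 3$ be an integer and let $\{D_I\}_{I\in\binom{[n]}{n-1}}$ be a family of positive real numbers, where $[n]=\{1,\dots,n\}$; write $D_{\hat i}=D_{[n]\setminus\{i\}}$ for $i\in[n]$. (a) There exists a positive-weighted tree $\mathcal T=(T,w)$ with $[n]\subseteq V(T)$ such that $D_{\hat i}(\mathcal T)=D_{\hat i}$ for all $i\in[n]$ if and only if $$(n-2)D_{\hat i}\le \sum_{j\in[n]\setminus\{i\}} D_{\hat j}\quad\text{for every } i\in[n],$$ and at most one of these $n$ inequalities is an equality. (b) There exists a positive-weighted tree $\mathcal T=(T,w)$ such that $[n]$ is contained in the set of leaves of $T$ and $D_{\hat i}(\mathcal T)=D_{\hat i}$ for all $i\in[n]$ if and only if $$(n-2)D_{\hat i}< \sum_{j\in[n]\setminus\{i\}} D_{\hat j}\quad\text{for every } i\in[n].$$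
   Context: All graphs are simple and finite. A positive-weighted graph $\mathcal G=(G,w)$ is a graph $G$ with a function $w:E(G)\to\mathbb R_{>0}$; for a subgraph $G'$, $w(G')$ is the sum of the weights of the edges of $G'$. For distinct vertices $i_1,\dots,i_k$ of $G$, $D_{\{i_1,\dots,i_k\}}(\mathcal G)$ is the minimum of $w(R)$ over all connected subgraphs $R$ of $G$ whose vertex set contains $i_1,\dots,i_k$. For a set $I\subseteq V(G)$ we write $D_I(\mathcal G)$ accordingly, and $D_{\hat i}(\mathcal G)=D_{[n]\setminus\{i\}}(\mathcal G)$. *)

From HB Require Import structures.
From mathcomp Require Import all_boot all_order all_algebra.
Set Implicit Arguments. Unset Strict Implicit. Unset Printing Implicit Defensive.
Import Order.TTheory GRing.Theory Num.Theory.
Local Open Scope ring_scope.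

Definition simple_graph (m : nat) (e : rel 'I_m) : Prop :=
  (forall x, ~~ e x x) /\ (forall x y, e x y = e y x).

Definition connected_graph (m : nat) (e : rel 'I_m) : Prop :=
  forall x y : 'I_m, connect e x y.

Definition has_cycle (m : nat) (e : rel 'I_m) : Prop :=
  exists c : seq 'I_m, [/\ 3 <= size c, uniq c & cycle e c]%N.

Definition is_tree (m : nat) (e : rel 'I_m) : Prop :=
  [/\ (0 < m)%N, simple_graph e, connected_graph e & ~ has_cycle e].

Definition pos_weight (R : realFieldType) (m : nat) (e : rel 'I_m)
  (w : 'I_m -> 'I_m -> R) : Prop :=
  forall x y, e x y -> 0 < w x y /\ w x y = w y x.

(* A subgraph (S, F): vertex set S, edge set F where each edge {x,y} of G is
   encoded by the ordered pair (x,y) with x < y. *)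
Definition subgraph (m : nat) (e : rel 'I_m) (S : {set 'I_m})
  (F : {set 'I_m * 'I_m}) : Prop :=
  forall p, p \in F -> [&& e p.1 p.2, (p.1 < p.2)%N, p.1 \in S & p.2 \in S].

Definition sub_adj (m : nat) (F : {set 'I_m * 'I_m}) : rel 'I_m :=
  fun x y => ((x, y) \in F) || ((y, x) \in F).

Definition connected_subgraph (m : nat) (e : rel 'I_m) (S : {set 'I_m})
  (F : {set 'I_m * 'I_m}) : Prop :=
  subgraph e S F /\ (forall x y, x \in S -> y \in S -> connect (sub_adj F) x y).

Definition sub_weight (R : realFieldType) (m : nat) (w : 'I_m -> 'I_m -> R)
  (F : {set 'I_m * 'I_m}) : R :=
  \sum_(p in F) w p.1 p.2.

Definition is_D (R : realFieldType) (m : nat) (e : rel 'I_m)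
  (w : 'I_m -> 'I_m -> R) (I : {set 'I_m}) (d : R) : Prop :=
  (exists S F, [/\ connected_subgraph e S F, I \subset S & sub_weight w F = d])
  /\ (forall S F, connected_subgraph e S F -> I \subset S -> d <= sub_weight w F).

Definition hat_set (n m : nat) (f : 'I_n -> 'I_m) (i : 'I_n) : {set 'I_m} :=
  [set f j | j in [set j : 'I_n | j != i]].

Definition is_leaf (m : nat) (e : rel 'I_m) (x : 'I_m) : bool :=
  #|[set y | e x y]| == 1%N.

From HB Require Import structures.
From mathcomp Require Import all_boot all_order all_algebra.
From mathcomp Require Import zify.
Import Order.TTheory GRing.Theory Num.Theory.
Local Open Scope ring_scope.
Set Implicit Arguments. Unset Strict Implicit. Unset Printing Implicit Defensive.

(* For each i fix a connected subgraph F_i of weight D_i spanning [n] minus i.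
   By minimality each edge of F_i has vertices of [n] minus i on both of its
   sides, so (n >= 3, T a tree) an edge of F_i is missing from at most one F_j,
   j <> i.  Counting the weight of every edge over the F_j then gives
   (n-2) D_i <= sum_{j<>i} D_j, with equality only when every F_j lies in F_i
   and every edge of F_i is missed by some F_j.  Equality at two indices i, k
   forces F_i = F_k, and an edge of F_i separating i from k lies in every F_j;
   equality at a leaf i puts the edge at i into every F_j.
   Conversely, with (n-1) P = sum_j D_j, the star whose leg at j has length
   P - D_j realizes the D_j; the legs are positive under the strict
   inequalities, and a tight index i0 (where P = D_i0) is put at the centre. *)

Lemma path_crossing_step (T : eqType) (r : rel T) (P : pred T) x p :
  path r x p -> P x -> ~~ P (last x p) -> exists y z, [/\ r y z, P y & ~~ P z].
Proof.
elim: p x => [|y p IH] x /=; first by move=> _ ->.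
case/andP=> rxy pp Px Pl; case Py: (P y); first exact: IH Py Pl.
by exists x, y; rewrite rxy Px Py.
Qed.

Lemma path_enters_through (T : eqType) (r : rel T) (P : pred T) c :
  (forall y z, r y z -> ~~ P y -> P z -> z = c) ->
  forall y q, path r y q -> ~~ P y -> P (last y q) -> c \in q.
Proof.
move=> entry y q; elim: q y => [|z q IH] y /=; first by move=> _ /negbTE ->.
case/andP=> ryz pq Py Pl; case Pz: (P z); first by rewrite (entry _ _ ryz Py Pz) mem_head.
by rewrite inE (IH z) ?orbT // Pz.
Qed.

Lemma path_stays (T : eqType) (r : rel T) (P : pred T) c :
  (forall y z, r y z -> P y -> ~~ P z -> y = c) ->
  (forall y z, r y z -> ~~ P y -> P z -> z = c) ->
  forall x p, path r x p -> uniq (x :: p) -> P x -> P (last x p) -> all P p.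
Proof.
move=> exit entry x p; elim: p x => [|y p IH] x //=.
case/andP=> rxy pp /andP[xNp up] Px Pl; case Py: (P y); first by rewrite (IH y).
have x_c := exit _ _ rxy Px (negbT Py).
have := path_enters_through entry pp (negbT Py) Pl.
by move: xNp; rewrite inE negb_or -x_c => /andP[_ /negbTE ->].
Qed.

Lemma connect_neq_step (T : finType) (r : rel T) x y :
  connect r x y -> x != y -> exists z, r x z.
Proof.
case/connectP=> [[|z p]] /=; first by move=> _ ->; rewrite eqxx.
by case/andP=> rxz _ _ _; exists z.
Qed.

Definition opair m (x y : 'I_m) : 'I_m * 'I_m := if (x < y)%N then (x, y) else (y, x).

Section EdgeSides.
Variables (m : nat) (e : rel 'I_m).

Definition rem_edge (a b : 'I_m) : rel 'I_m :=
  fun y z => e y z && ~~ (((y == a) && (z == b)) || ((y == b) && (z == a))).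

Definition side (a b : 'I_m) : {set 'I_m} := [set v | connect (rem_edge a b) a v].

Lemma side_src a b : a \in side a b.
Proof. by rewrite inE connect0. Qed.

Hypotheses (simple_e : simple_graph e) (acyclic_e : ~ has_cycle e).

Lemma side_tgtN a b : e a b -> b \notin side a b.
Proof.
have [irr sym] := simple_e; move=> eab; apply/negP; rewrite inE => /connectP[s].
case/shortenP=> s' ps' us' _ b_last; apply: acyclic_e; exists (a :: s'); split=> //.
- case: s' ps' us' b_last => [|z [|z' s'']] //=.
    by move=> _ _ b_a; move: eab (irr a); rewrite b_a => ->.
  by case/andP; rewrite /rem_edge => + _ _ b_z; rewrite -b_z !eqxx andbF.
- rewrite /= rcons_path -b_last sym eab andbT.
  by apply: sub_path ps' => y z /andP[].
Qed.

Lemma side_exit a b y z :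
  e a b -> e y z -> y \in side a b -> z \notin side a b -> y = a /\ z = b.
Proof.
move=> eab eyz y_in z_out; have b_out := side_tgtN eab.
case E: (((y == a) && (z == b)) || ((y == b) && (z == a))).
  case/orP: E => /andP[/eqP y_a /eqP z_b] //.
  by move: y_in; rewrite y_a (negbTE b_out).
move: z_out; rewrite !inE in y_in *; case/negP.
by apply: connect_trans y_in (connect1 _); rewrite /rem_edge eyz E.
Qed.

Lemma path_avoiding_tgt_in_side a b q :
  e a b -> path e a q -> b \notin q -> last a q \in side a b.
Proof.
move=> eab pq bNq; rewrite inE; apply/connectP; exists q => //.
have ba : b != a by apply: contraTneq eab => ->; rewrite (negbTE (simple_e.1 a)).
have rem_path x : path e x q -> b \notin x :: q -> path (rem_edge a b) x q.
  elim: q x {pq bNq} => //= z q IH y /andP[eyz pq].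
  rewrite !inE !negb_or => /and3P[b_y b_z bNq]; rewrite IH ?inE ?negb_or ?b_z //.
  by rewrite /rem_edge eyz ![_ == b]eq_sym (negbTE b_y) (negbTE b_z) !andbF.
by apply: rem_path; rewrite // inE negb_or ba.
Qed.

Lemma path_avoiding_src_notin_side a b q :
  e a b -> path e b q -> a \notin q -> last b q \notin side a b.
Proof.
move=> eab pq aNq; apply/negP => l_in; case/negP: aNq.
apply: (path_enters_through (P := mem (side a b))) pq _ l_in; last exact: side_tgtN.
move=> y z eyz /= y_out z_in.
by case: (side_exit eab (etrans (simple_e.2 z y) eyz) z_in y_out).
Qed.

Lemma opair_side_separates x y q : e x y -> path e y q -> x \notin q ->
  (x \in side (opair x y).1 (opair x y).2) != (last y q \in side (opair x y).1 (opair x y).2).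
Proof.
move=> exy pq xNq; rewrite /opair; case: ifP => _ /=.
  by rewrite side_src (path_avoiding_src_notin_side exy pq xNq).
rewrite simple_e.2 in exy.
by rewrite (negbTE (side_tgtN exy)) (path_avoiding_tgt_in_side exy pq xNq).
Qed.

End EdgeSides.

Lemma sub_adj_sym m (F : {set 'I_m * 'I_m}) : symmetric (sub_adj F).
Proof. by move=> x y; rewrite /sub_adj orbC. Qed.

Section Subgraphs.
Variables (m : nat) (e : rel 'I_m) (S : {set 'I_m}) (F : {set 'I_m * 'I_m}).
Hypotheses (simple_e : simple_graph e) (sub_F : subgraph e S F).

Lemma sub_adj_opair x y : sub_adj F x y = (opair x y \in F).
Proof.
rewrite /sub_adj /opair; case: ltnP => [xy|yx].
  case yxF: ((y, x) \in F); rewrite ?orbF //.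
  by case/and4P: (sub_F yxF) => _ /= yx _ _; move: (ltn_trans xy yx); rewrite ltnn.
case xyF: ((x, y) \in F) => //.
by case/and4P: (sub_F xyF) => _ /= xy _ _; move: (leq_trans xy yx); rewrite ltnn.
Qed.

Lemma sub_adj_edge y z : sub_adj F y z -> e y z.
Proof. by rewrite /sub_adj => /orP[] /sub_F /and4P[] //; rewrite simple_e.2. Qed.

Lemma sub_adj_cut_side a b u v : ~ has_cycle e -> e a b -> (a < b)%N ->
  connect (sub_adj F) u v -> u \in side e a b -> v \notin side e a b -> (a, b) \in F.
Proof.
move=> acyclic_e eab ab /connectP[s ps ->] u_in v_out.
have [y [z [Fyz y_in z_out]]] := path_crossing_step ps u_in v_out.
have [y_a z_b] := side_exit simple_e acyclic_e eab (sub_adj_edge Fyz) y_in z_out.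
by move: Fyz; rewrite y_a z_b sub_adj_opair /opair ab.
Qed.

Lemma sub_adj_separating_edge x x' : ~ has_cycle e -> x != x' -> connect (sub_adj F) x x' ->
  exists a b, (a, b) \in F /\ (x \in side e a b) != (x' \in side e a b).
Proof.
move=> acyclic_e xx' /connectP[s]; case/shortenP=> [[|y q]] /= Fpath uniq_path _ x'_last.
  by rewrite x'_last eqxx in xx'.
case/andP: Fpath => Fxy Fpath; rewrite x'_last.
have xNq : x \notin q by case/andP: uniq_path; rewrite inE negb_or => /andP[].
have e_path : path e y q by apply: sub_path Fpath => ? ?; apply: sub_adj_edge.
exists (opair x y).1, (opair x y).2; rewrite -surjective_pairing -sub_adj_opair.
by split=> //; apply: opair_side_separates (sub_adj_edge Fxy) e_path xNq.
Qed.

Lemma connected_subgraph_restrict (X : {set 'I_m}) c :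
  (forall x y, x \in S -> y \in S -> connect (sub_adj F) x y) ->
  (forall y z, e y z -> y \in X -> z \notin X -> y = c) ->
  connected_subgraph e (S :&: X) [set p in F | (p.1 \in X) && (p.2 \in X)].
Proof.
move=> conn_F exit_X; split.
  move=> p; rewrite inE => /andP[/sub_F /and4P[-> -> p1S p2S] /andP[p1X p2X]].
  by rewrite !inE p1S p2S p1X p2X.
move=> u v; rewrite !inE => /andP[uS uX] /andP[vS vX].
case/connectP: (conn_F u v uS vS) => s; case/shortenP=> s' ps' us' _ v_last.
have exit_F y z : sub_adj F y z -> y \in X -> z \notin X -> y = c.
  by move/sub_adj_edge; apply: exit_X.
have entry_F y z : sub_adj F y z -> y \notin X -> z \in X -> z = c.
  by rewrite sub_adj_sym => /exit_F + yX zX; apply.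
have sX : all (mem X) s'.
  by apply: (path_stays (P := mem X) exit_F entry_F ps' us' uX); rewrite /= -v_last.
have sub_X : {in mem X &, subrel (sub_adj F)
    (sub_adj [set p in F | (p.1 \in X) && (p.2 \in X)])}.
  by move=> y z yX zX; rewrite /sub_adj !inE /= yX zX !andbT.
apply/connectP; exists s' => //; apply: (sub_in_path sub_X) => //=.
exact/andP.
Qed.
End Subgraphs.

Lemma sub_weight_filter_lt (R : realFieldType) m (w : 'I_m -> 'I_m -> R)
    (F : {set 'I_m * 'I_m}) (P : pred ('I_m * 'I_m)) p :
  (forall q, q \in F -> 0 <= w q.1 q.2) -> p \in F -> ~~ P p -> 0 < w p.1 p.2 ->
  sub_weight w [set q in F | P q] < sub_weight w F.
Proof.
move=> w_ge0 pF pNP wp_gt0; rewrite /sub_weight [X in _ < X](bigID P) /=.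
rewrite (eq_bigl (fun q => (q \in F) && P q)) => [|q]; last by rewrite inE.
rewrite ltrDl (bigD1 p) ?pF //=; apply: (lt_le_trans wp_gt0).
by rewrite lerDl sumr_ge0 // => q /andP[/andP[/w_ge0]].
Qed.

Lemma sub_weight_subset (R : realFieldType) m (w : 'I_m -> 'I_m -> R)
    (F F' : {set 'I_m * 'I_m}) :
  F \subset F' -> (forall p, p \in F' -> 0 <= w p.1 p.2) -> sub_weight w F <= sub_weight w F'.
Proof.
move=> FF' w_ge0; rewrite /sub_weight [X in _ <= X](bigID (mem F)) /=.
have -> : \sum_(p in F' | p \in F) w p.1 p.2 = \sum_(p in F) w p.1 p.2.
  by apply: eq_bigl => p; rewrite andb_idl // => /(subsetP FF').
by rewrite lerDl sumr_ge0 // => p /andP[/w_ge0].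
Qed.

Lemma exists_ord_neq2 n (j k : 'I_n) : (3 <= n)%N -> exists l, (l != j) && (l != k).
Proof.
move=> n_ge3; have: (0 < #|~: [set j; k]|)%N.
  by have := cardsC [set j; k]; rewrite cards2 card_ord; move: (leq_b1 (j != k)); lia.
by case/card_gt0P => l; rewrite !inE negb_or; exists l.
Qed.

Lemma mem_hat_set n m (f : 'I_n -> 'I_m) i l : l != i -> f l \in hat_set f i.
Proof. by move=> li; apply: imset_f; rewrite inE. Qed.

Lemma hat_setP n m (f : 'I_n -> 'I_m) i x :
  x \in hat_set f i -> exists2 l, l != i & x = f l.
Proof. by case/imsetP => l; rewrite inE => li ->; exists l. Qed.

Lemma sumr_const_neq (V : nmodType) n (i : 'I_n) (x : V) :
  \sum_(j | j != i) x = x *+ n.-1.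
Proof. by rewrite sumr_const cardC1 card_ord. Qed.

Section OptimalSubtrees.
Variables (R : realFieldType) (m n : nat) (e : rel 'I_m) (w : 'I_m -> 'I_m -> R).
Variables (f : 'I_n -> 'I_m) (D : 'I_n -> R).
Variables (S : 'I_n -> {set 'I_m}) (F : 'I_n -> {set 'I_m * 'I_m}).
Hypotheses (n_ge3 : (3 <= n)%N) (tree_e : is_tree e) (w_pos : pos_weight e w).
Hypotheses (f_inj : injective f) (D_hat : forall i, is_D e w (hat_set f i) (D i)).
Hypothesis F_opt : forall i,
  [/\ connected_subgraph e (S i) (F i), hat_set f i \subset S i & sub_weight w (F i) = D i].

Let simple_e : simple_graph e. Proof. by case: tree_e. Qed.
Let acyclic_e : ~ has_cycle e. Proof. by case: tree_e. Qed.
Let sub_F i : subgraph e (S i) (F i). Proof. by case: (F_opt i) => -[]. Qed.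

Lemma F_edge i a b : (a, b) \in F i -> e a b /\ (a < b)%N.
Proof. by move/sub_F/and4P=> []. Qed.

Lemma F_weight_gt0 i p : p \in F i -> 0 < w p.1 p.2.
Proof. by case: p => a b /F_edge[/w_pos[]]. Qed.

Lemma connect_F_hat j u v : u != j -> v != j -> connect (sub_adj (F j)) (f u) (f v).
Proof.
have [[_ conn] hat_S _] := F_opt j.
by move=> uj vj; apply: conn; apply: (subsetP hat_S); apply: mem_hat_set.
Qed.

Lemma F_cut_side j a b u v : e a b -> (a < b)%N -> u != j -> v != j ->
  (f u \in side e a b) != (f v \in side e a b) -> (a, b) \in F j.
Proof.
move=> eab ab uj vj; have cut := sub_adj_cut_side simple_e (@sub_F j) acyclic_e eab ab.
case: (boolP (f u \in side e a b)) => /= [u_in v_out|u_out /negPn v_in].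
  exact: cut (connect_F_hat uj vj) u_in v_out.
exact: cut (connect_F_hat vj uj) v_in u_out.
Qed.

(* Otherwise restricting F i to X gives a lighter subgraph spanning the hat set. *)
Lemma hat_escapes_region i (X : {set 'I_m}) c p :
  (forall y z, e y z -> y \in X -> z \notin X -> y = c) ->
  p \in F i -> ~~ ((p.1 \in X) && (p.2 \in X)) -> exists2 l, l != i & f l \notin X.
Proof.
move=> exit_X pF pNX; apply/exists_inP; apply: contraNT pNX.
rewrite negb_exists_in => /forall_inP hat_X.
have [[_ conn] hat_S F_D] := F_opt i.
have hat_SX : hat_set f i \subset S i :&: X.
  apply/subsetP => x x_hat; rewrite inE (subsetP hat_S x x_hat).
  by case/hat_setP: x_hat => l li ->; rewrite -[_ \in X]negbK hat_X.
have := (D_hat i).2 _ _ (connected_subgraph_restrict simple_e (@sub_F i) conn exit_X) hat_SX.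
rewrite -F_D leNgt; apply: contraNT => pNX.
apply: (sub_weight_filter_lt _ pF pNX (F_weight_gt0 pF)).
by move=> q /F_weight_gt0/ltW.
Qed.

Lemma F_edge_splits_hat i a b : (a, b) \in F i ->
  (exists2 l, l != i & f l \in side e a b) /\ (exists2 l, l != i & f l \notin side e a b).
Proof.
move=> abF; have [eab _] := F_edge abF.
have exit_side y z : e y z -> y \in side e a b -> z \notin side e a b -> y = a.
  by move=> eyz y_in z_out; case: (side_exit simple_e acyclic_e eab eyz y_in z_out).
split.
  have exit_out y z : e y z -> y \in ~: side e a b -> z \notin ~: side e a b -> y = b.
    move=> eyz; rewrite !in_setC negbK => y_out z_in.
    by case: (side_exit simple_e acyclic_e eab (etrans (simple_e.2 z y) eyz) z_in y_out).
  have [|l li] := hat_escapes_region exit_out abF; first by rewrite /= !in_setC side_src.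
  by rewrite in_setC negbK; exists l.
apply: hat_escapes_region exit_side abF _.
by rewrite /= (negbTE (side_tgtN simple_e acyclic_e eab)) andbF.
Qed.

Lemma hat_one_side i j a b : (a, b) \in F i -> (a, b) \notin F j ->
  exists s, forall l, l != j -> (f l \in side e a b) = s.
Proof.
move=> abF abNFj; have [eab ab] := F_edge abF.
have [l0 /andP[l0j _]] := exists_ord_neq2 j j n_ge3.
exists (f l0 \in side e a b) => l lj; apply/eqP; apply: contraNT abNFj => sep.
exact: F_cut_side eab ab lj l0j sep.
Qed.

Lemma missed_at_most_once i j k p : p \in F i -> p \notin F j -> p \notin F k -> j = k.
Proof.
case: p => a b abF abNFj abNFk.
have [sj side_j] := hat_one_side abF abNFj; have [sk side_k] := hat_one_side abF abNFk.
have [l /andP[lj lk]] := exists_ord_neq2 j k n_ge3.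
have sjk : sj = sk by rewrite -(side_j l lj) (side_k l lk).
have [[l1 _ l1_in] [l2 _ l2_out]] := F_edge_splits_hat abF.
have [l' l'_odd] : exists l', (f l' \in side e a b) != sj.
  by case: (sj); [exists l2; rewrite (negbTE l2_out) | exists l1; rewrite l1_in].
have l'_j : l' = j by apply/eqP; apply: contraNT l'_odd => /side_j ->.
have l'_k : l' = k by apply/eqP; apply: contraNT l'_odd => /side_k ->; rewrite sjk.
by rewrite -l'_j.
Qed.

Definition weight_in j (p : 'I_m * 'I_m) : R := if p \in F j then w p.1 p.2 else 0.

Definition excess i p : R := \sum_(j | j != i) weight_in j p - (n.-2)%:R * weight_in i p.

Lemma weight_in_ge0 j p : 0 <= weight_in j p.
Proof. by rewrite /weight_in; case: ifP => // /F_weight_gt0/ltW. Qed.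

Lemma sum_excess i : \sum_(j | j != i) D j - (n.-2)%:R * D i = \sum_p excess i p.
Proof.
have D_in j : D j = \sum_p weight_in j p.
  by case: (F_opt j) => _ _ <-; rewrite /sub_weight big_mkcond.
rewrite /excess sumrB -mulr_sumr -D_in; congr (_ - _).
by rewrite (eq_bigr _ (fun j _ => D_in j)) exchange_big.
Qed.

Lemma excess_in i p : p \in F i ->
  excess i p = w p.1 p.2 *+ [forall j, (j != i) ==> (p \in F j)].
Proof.
have n1 : n.-1 = (n.-2).+1 by lia.
move=> pFi; rewrite /excess {2}/weight_in pFi mulr_natl.
case: (boolP [forall j, _]) => [/forallP in_all|/forallPn[j0]].
  rewrite (eq_bigr (fun _ => w p.1 p.2)) => [|j ji]; last first.
    by rewrite /weight_in (implyP (in_all j) ji).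
  by rewrite sumr_const_neq n1 mulrSr addrAC subrr add0r.
rewrite negb_imply => /andP[j0i pNFj0]; apply/eqP; rewrite mulr0n subr_eq0.
rewrite -(inj_eq (addIr (w p.1 p.2))) -mulrSr -n1 -(sumr_const_neq i).
rewrite (bigD1 j0) //= [X in _ == X](bigD1 j0) //= {1}/weight_in (negbTE pNFj0) add0r addrC.
apply/eqP; congr (_ + _); apply: eq_bigr => j /andP[ji jj0].
rewrite /weight_in; case: ifP => // /negbT pNFj.
by rewrite (missed_at_most_once pFi pNFj pNFj0) eqxx in jj0.
Qed.

Lemma excess_out i p : p \notin F i -> excess i p = \sum_(j | j != i) weight_in j p.
Proof. by move=> pNFi; rewrite /excess {2}/weight_in (negbTE pNFi) mulr0 subr0. Qed.

Lemma excess_ge0 i p : 0 <= excess i p.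
Proof.
have [pFi|pNFi] := boolP (p \in F i).
  by rewrite excess_in // mulrn_wge0 // ltW // (F_weight_gt0 pFi).
by rewrite excess_out //; apply: sumr_ge0 => j _; apply: weight_in_ge0.
Qed.

Lemma defect_ge0 i : (n.-2)%:R * D i <= \sum_(j | j != i) D j.
Proof. by rewrite -subr_ge0 sum_excess; apply: sumr_ge0 => p _; apply: excess_ge0. Qed.

Lemma tight_subtrees i : (n.-2)%:R * D i = \sum_(j | j != i) D j ->
  (forall j, j != i -> {subset F j <= F i}) /\
  (forall p, p \in F i -> exists2 j, j != i & p \notin F j).
Proof.
move/esym/eqP; rewrite -subr_eq0 sum_excess => /eqP/psumr_eq0P excess0.
have {}excess0 p : excess i p = 0 by exact: excess0 (fun q _ => excess_ge0 i q) p isT.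
split=> [j ji p pFj|p pFi].
  apply: contraT => pNFi; move: (excess0 p); rewrite excess_out // => /psumr_eq0P in0.
  move: (in0 (fun k _ => weight_in_ge0 k p) j ji); rewrite /weight_in pFj => w0.
  by move: (F_weight_gt0 pFj); rewrite w0 ltxx.
move: (excess0 p); rewrite excess_in //.
case: (boolP [forall j, _]) => [_ w0|/forallPn[j]].
  by move: (F_weight_gt0 pFi); rewrite -[w _ _]mulr1n w0 ltxx.
by rewrite negb_imply => /andP[ji pNFj]; exists j.
Qed.

Lemma tight_unique i k : (n.-2)%:R * D i = \sum_(j | j != i) D j ->
  (n.-2)%:R * D k = \sum_(j | j != k) D j -> i = k.
Proof.
move=> tight_i tight_k; apply/eqP/negPn/negP => ik; have ki : k != i by rewrite eq_sym.
have [Fi_sub Fi_missed] := tight_subtrees tight_i; have [Fk_sub _] := tight_subtrees tight_k.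
have Fik : F i = F k by apply/setP => p; apply/idP/idP; [apply: Fk_sub | apply: Fi_sub].
have [l /andP[li lk]] := exists_ord_neq2 i k n_ge3.
have conn_ik : connect (sub_adj (F i)) (f i) (f k).
  by apply: connect_trans (connect_F_hat li ki); rewrite Fik; apply: connect_F_hat.
have fik : f i != f k by rewrite (inj_eq f_inj).
have [a [b [abF sep]]] := sub_adj_separating_edge simple_e (@sub_F i) acyclic_e fik conn_ik.
have [eab ab] := F_edge abF; have [j ji abNFj] := Fi_missed _ abF.
have ij : i != j by rewrite eq_sym.
have kj : k != j by apply: contraNneq abNFj => <-; rewrite -Fik.
by rewrite (F_cut_side eab ab ij kj sep) in abNFj.
Qed.

Lemma leaf_not_tight i : is_leaf e (f i) -> (n.-2)%:R * D i != \sum_(j | j != i) D j.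
Proof.
case/cards1P=> y nbr_fi; apply/eqP => tight_i.
have [Fi_sub Fi_missed] := tight_subtrees tight_i.
have yF j : j != i -> opair (f i) y \in F j.
  move=> ji; have [l /andP[li lj]] := exists_ord_neq2 i j n_ge3.
  have fil : f i != f l by rewrite (inj_eq f_inj) eq_sym.
  have ij : i != j by rewrite eq_sym.
  have [z Fz] := connect_neq_step (connect_F_hat ij lj) fil.
  have : z \in [set z | e (f i) z] by rewrite inE (sub_adj_edge simple_e (@sub_F j) Fz).
  by rewrite nbr_fi inE => /eqP z_y; rewrite -(sub_adj_opair (@sub_F j)) -z_y.
have [j0 /andP[j0i _]] := exists_ord_neq2 i i n_ge3.
have [j ji] := Fi_missed _ (Fi_sub j0 j0i _ (yF j0 j0i)).
by rewrite yF.
Qed.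

End OptimalSubtrees.

Section Star.
Variables (m : nat) (c : 'I_m).

Definition star : rel 'I_m := fun u v => (u == c) != (v == c).

Lemma star_simple : simple_graph star.
Proof. by split=> [x|x y]; rewrite /star ?eqxx // eq_sym. Qed.

Lemma star_connect_center x : connect star x c.
Proof.
have [->|xc] := eqVneq x c; first exact: connect0.
by apply: connect1; rewrite /star (negbTE xc) eqxx.
Qed.

Lemma star_acyclic : ~ has_cycle star.
Proof.
case=> [[|x0 [|x1 [|x2 p]]]] [//= _ uniq_cyc].
rewrite /cycle /= => /and3P[s01 s12 s2p].
have [x3 s23 x13] : exists2 x3, star x2 x3 & x1 != x3.
  move: uniq_cyc s2p; rewrite /= !inE !negb_or.
  case: p => [|y p] /= /and3P[/and3P[x01 _ _] /andP[_ x1p] _] /andP[s2 _].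
    by exists x0; rewrite // eq_sym.
  by exists y => //; move: x1p; rewrite inE negb_or => /andP[].
move: uniq_cyc => /= /and3P[]; rewrite !inE !negb_or => /and3P[_ x02 _] _ _.
have e13 : (x1 == c) = (x3 == c) by move: s12 s23; rewrite /star; do 3!case: (_ == c).
have e02 : (x0 == c) = (x2 == c) by move: s01 s12; rewrite /star; do 3!case: (_ == c).
have [x1c|x1Nc] := boolP (x1 == c).
  by case/negP: x13; rewrite (eqP x1c) eq_sym -e13.
have x0c : x0 == c by move: s01; rewrite /star (negbTE x1Nc); case: (x0 == c).
by case/negP: x02; rewrite (eqP x0c) eq_sym -e02.
Qed.

Lemma star_tree : is_tree star.
Proof.
split; [exact: leq_ltn_trans (ltn_ord c) | exact: star_simple | | exact: star_acyclic].
move=> x y; apply: connect_trans (star_connect_center x) _.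
by rewrite (sym_connect_sym star_simple.2) star_connect_center.
Qed.

Lemma star_leaf v : v != c -> is_leaf star v.
Proof.
move=> vc; apply/cards1P; exists c; apply/setP => y.
by rewrite !inE /star (negbTE vc); case: (y == c).
Qed.
End Star.

Definition star_weight (R : realFieldType) m (c : 'I_m) (q : 'I_m -> R) : 'I_m -> 'I_m -> R :=
  fun u v => if u == c then q v else q u.

Section StarWeight.
Variables (R : realFieldType) (m : nat) (c : 'I_m) (q : 'I_m -> R).
Hypothesis q_gt0 : forall v, v != c -> 0 < q v.

Lemma star_pos_weight : pos_weight (star c) (star_weight c q).
Proof.
move=> x y; rewrite /star /star_weight.
have [_|xc] := eqVneq x c; have [_|yc] := eqVneq y c; rewrite //= => _.
all: by split=> //; apply: q_gt0.
Qed.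

Lemma star_opair_edge v : v != c ->
  star c (opair v c).1 (opair v c).2 && ((opair v c).1 < (opair v c).2)%N.
Proof.
move=> vc; rewrite /opair /star; case: ltnP => /= [->|]; rewrite eqxx (negbTE vc) //=.
by rewrite leq_eqVlt (inj_eq val_inj) eq_sym (negbTE vc).
Qed.

Lemma star_weight_opair v : v != c -> star_weight c q (opair v c).1 (opair v c).2 = q v.
Proof.
by move=> vc; rewrite /opair /star_weight; case: ltnP => _ /=; rewrite ?eqxx ?(negbTE vc).
Qed.

Lemma opair_center_inj : {in predC1 c &, injective (fun v => opair v c)}.
Proof.
move=> u v /= uc vc; rewrite /opair.
by case: ltnP => _; case: ltnP => _ [] // E; move: uc vc; rewrite E !inE eqxx.
Qed.

Lemma star_is_D (I : {set 'I_m}) : q c = 0 -> (1 < #|I|)%N ->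
  is_D (star c) (star_weight c q) I (\sum_(v in I) q v).
Proof.
move=> q_c I_gt1; set F := [set opair v c | v in I :\ c].
have sub_F : subgraph (star c) (c |: I) F.
  move=> p /imsetP[v]; rewrite !inE => /andP[vc vI] ->.
  have /andP[-> ->] := star_opair_edge vc.
  by rewrite /opair; case: ltnP => _ /=; rewrite eqxx vI ?orbT.
have F_weight : sub_weight (star_weight c q) F = \sum_(v in I) q v.
  rewrite /sub_weight big_imset /=; last first.
    by move=> u v /setD1P[uc _] /setD1P[vc _]; apply: opair_center_inj.
  rewrite [RHS](bigID (pred1 c)) /= [X in _ = X + _]big1 ?add0r; last by move=> v /andP[_ /eqP ->].
  by apply: eq_big => [v|v /setD1P[vc _]]; rewrite ?star_weight_opair // !inE andbC.
split.
  exists (c |: I), F; split=> //; last exact: subsetUr.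
  have to_c z : z \in c |: I -> connect (sub_adj F) z c.
    rewrite !inE; have [->|zc] /= := eqVneq z c; first by rewrite connect0.
    move=> zI; apply: connect1; rewrite (sub_adj_opair sub_F); apply: imset_f.
    by rewrite !inE zc.
  split=> // x y xS yS; apply: connect_trans (to_c x xS) _.
  by rewrite (sym_connect_sym (@sub_adj_sym _ F)) to_c.
move=> S' F' [sub_F' conn_F'] I_S'; rewrite -F_weight; apply: sub_weight_subset; last first.
  by case=> a b /sub_F'/and4P[/star_pos_weight[/ltW]].
apply/subsetP => p /imsetP[v]; rewrite !inE => /andP[vc vI] ->.
have [u uI vu] : exists2 u, u \in I & v != u.
  have [x [y [xI yI xy]]] := card_gt1P I_gt1.
  by have [vx|vx] := eqVneq v x; [exists y; rewrite // vx | exists x].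
have [z Fz] := connect_neq_step (conn_F' v u (subsetP I_S' v vI) (subsetP I_S' u uI)) vu.
have : star c v z := sub_adj_edge (star_simple c) sub_F' Fz.
rewrite /star (negbTE vc) => zc; have z_c : z = c by apply/eqP; move: zc; case: (z == c).
by rewrite -(sub_adj_opair sub_F') -z_c.
Qed.
End StarWeight.

Lemma tree_realization_necessary (R : realFieldType) m n (e : rel 'I_m)
    (w : 'I_m -> 'I_m -> R) (f : 'I_n -> 'I_m) (D : 'I_n -> R) :
  (3 <= n)%N -> is_tree e -> pos_weight e w -> injective f ->
  (forall i, is_D e w (hat_set f i) (D i)) ->
  [/\ forall i, (n.-2)%:R * D i <= \sum_(j | j != i) D j,
      forall i k, (n.-2)%:R * D i = \sum_(j | j != i) D j ->
                  (n.-2)%:R * D k = \sum_(j | j != k) D j -> i = k &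
      forall i, is_leaf e (f i) -> (n.-2)%:R * D i < \sum_(j | j != i) D j].
Proof.
move=> n_ge3 tree_e w_pos f_inj D_hat.
have [S /fin_all_exists[F F_opt]] := fin_all_exists (fun i => (D_hat i).1).
have le_i := defect_ge0 n_ge3 tree_e w_pos D_hat F_opt.
split=> // [i k|i leaf_i]; first exact: (tight_unique n_ge3 tree_e w_pos f_inj D_hat F_opt).
by rewrite lt_neqAle (leaf_not_tight n_ge3 tree_e w_pos f_inj D_hat F_opt leaf_i) le_i.
Qed.

Section StarRealization.
Variables (R : realFieldType) (n : nat) (D : 'I_n -> R).
Hypothesis n_ge3 : (3 <= n)%N.

Lemma star_leg_gt0 (P : R) j : P *+ n.-1 = \sum_k D k ->
  (n.-2)%:R * D j < \sum_(k | k != j) D k -> 0 < P - D j.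
Proof.
have n1 : n.-1 = (n.-2).+1 by lia.
move=> P_sum strict_j; rewrite -(@pmulrn_lgt0 _ _ n.-1); last by lia.
rewrite mulrnBl P_sum (bigD1 j) //= n1 mulrSr -mulr_natl.
by rewrite [_ + D j]addrC opprD addrACA subrr add0r subr_gt0.
Qed.

Lemma star_realizes m (f : 'I_n -> 'I_m) (c : 'I_m) (q : 'I_m -> R) (P : R) :
  injective f -> q c = 0 -> (forall v, v != c -> 0 < q v) ->
  (forall j, q (f j) = P - D j) -> P *+ n.-1 = \sum_j D j ->
  forall i, is_D (star c) (star_weight c q) (hat_set f i) (D i).
Proof.
move=> f_inj q_c q_gt0 q_f P_sum i.
have hat_gt1 : (1 < #|hat_set f i|)%N.
  by rewrite card_imset // cardsE cardC1 card_ord; lia.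
have := star_is_D q_gt0 q_c hat_gt1; rewrite big_imset /=; last by move=> ? ? _ _ /f_inj.
rewrite (eq_big (fun j => j != i) (fun j => P - D j)) => [|j|j _]; rewrite ?inE ?q_f //.
by rewrite sumrB sumr_const_neq P_sum (bigD1 i) //= addrK.
Qed.

Lemma leaf_realization :
  (forall i, (n.-2)%:R * D i < \sum_(j | j != i) D j) ->
  exists m (e : rel 'I_m) (w : 'I_m -> 'I_m -> R) (f : 'I_n -> 'I_m),
    [/\ is_tree e, pos_weight e w, injective f, (forall i, is_leaf e (f i)) &
        forall i, is_D e w (hat_set f i) (D i)].
Proof.
move=> strict; pose c : 'I_n.+1 := ord_max.
pose P := (\sum_j D j) / (n.-1)%:R.
pose q v := if unlift c v is Some j then P - D j else 0.
have P_sum : P *+ n.-1 = \sum_j D j by rewrite /P -mulr_natr divfK // pnatr_eq0; lia.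
have q_f j : q (lift c j) = P - D j by rewrite /q liftK.
have q_gt0 v : v != c -> 0 < q v.
  by case: (unliftP c v) => [j ->|->]; rewrite ?eqxx // q_f => _; apply: star_leg_gt0.
exists n.+1, (star c), (star_weight c q), (lift c); split.
- exact: star_tree.
- exact: star_pos_weight.
- exact: lift_inj.
- by move=> i; apply: star_leaf; rewrite eq_sym neq_lift.
- by apply: (star_realizes (@lift_inj _ c)) q_f P_sum => //; rewrite /q unlift_none.
Qed.

Lemma tight_realization i0 :
  (n.-2)%:R * D i0 = \sum_(j | j != i0) D j ->
  (forall i, i != i0 -> (n.-2)%:R * D i < \sum_(j | j != i) D j) ->
  exists m (e : rel 'I_m) (w : 'I_m -> 'I_m -> R) (f : 'I_n -> 'I_m),
    [/\ is_tree e, pos_weight e w, injective f & forall i, is_D e w (hat_set f i) (D i)].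
Proof.
move=> tight_i0 strict; pose q v := D i0 - D v.
have n1 : n.-1 = (n.-2).+1 by lia.
have P_sum : D i0 *+ n.-1 = \sum_j D j.
  by rewrite n1 mulrSr -mulr_natl tight_i0 [RHS](bigD1 i0) //= addrC.
have q_gt0 v : v != i0 -> 0 < q v by move=> vi0; apply: star_leg_gt0 (strict v vi0).
exists n, (star i0), (star_weight i0 q), id; split.
- exact: star_tree.
- exact: star_pos_weight.
- exact: inj_id.
- by apply: (star_realizes (@inj_id _)) => //; rewrite /q subrr.
Qed.

Lemma tree_realization_sufficient :
  (forall i, (n.-2)%:R * D i <= \sum_(j | j != i) D j) ->
  (forall i k, (n.-2)%:R * D i = \sum_(j | j != i) D j ->
               (n.-2)%:R * D k = \sum_(j | j != k) D j -> i = k) ->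
  exists m (e : rel 'I_m) (w : 'I_m -> 'I_m -> R) (f : 'I_n -> 'I_m),
    [/\ is_tree e, pos_weight e w, injective f & forall i, is_D e w (hat_set f i) (D i)].
Proof.
move=> le_D tight_uniq.
have [/existsP[i0 /eqP tight_i0]|no_tight] :=
  boolP [exists i, (n.-2)%:R * D i == \sum_(j | j != i) D j].
  apply: (tight_realization tight_i0) => i ii0; rewrite lt_neqAle le_D andbT.
  by apply: contra ii0 => /eqP tight_i; rewrite (tight_uniq _ _ tight_i tight_i0).
have strict i : (n.-2)%:R * D i < \sum_(j | j != i) D j.
  by rewrite lt_neqAle le_D andbT; move: no_tight; rewrite negb_exists => /forallP.
have [m [e [w [f [tree_e w_pos f_inj _ D_hat]]]]] := leaf_realization strict.
by exists m, e, w, f.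
Qed.
End StarRealization.

Theorem theorem3p1 (R : realFieldType) (n : nat) (D : 'I_n -> R) :
  (3 <= n)%N -> (forall i, 0 < D i) ->
  (* (a) *)
  ((exists (m : nat) (e : rel 'I_m) (w : 'I_m -> 'I_m -> R) (f : 'I_n -> 'I_m),
      [/\ is_tree e, pos_weight e w, injective f &
          forall i, is_D e w (hat_set f i) (D i)])
   <->
   ((forall i : 'I_n, (n.-2)%:R * D i <= \sum_(j : 'I_n | j != i) D j) /\
    (#|[set i : 'I_n | ((n.-2)%:R * D i == \sum_(j : 'I_n | j != i) D j)%R]| <= 1)%N))
  /\
  (* (b) *)
  ((exists (m : nat) (e : rel 'I_m) (w : 'I_m -> 'I_m -> R) (f : 'I_n -> 'I_m),
      [/\ is_tree e, pos_weight e w, injective f,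
          (forall i, is_leaf e (f i)) &
          forall i, is_D e w (hat_set f i) (D i)])
   <->
   (forall i : 'I_n, (n.-2)%:R * D i < \sum_(j : 'I_n | j != i) D j)).
Proof.
move=> n_ge3 _; split; split.
- case=> m [e [w [f [tree_e w_pos f_inj D_hat]]]].
  have [le_D tight_uniq _] := tree_realization_necessary n_ge3 tree_e w_pos f_inj D_hat.
  split=> //; apply/card_le1_eqP => i k; rewrite !inE => /eqP tight_i /eqP tight_k.
  exact: tight_uniq.
- case=> le_D /card_le1_eqP tight_le1; apply: tree_realization_sufficient => // i k tight_i tight_k.
  by apply: tight_le1; rewrite inE; apply/eqP.
- case=> m [e [w [f [tree_e w_pos f_inj leaf_f D_hat]]]] i.
  by have [_ _ strict] := tree_realization_necessary n_ge3 tree_e w_pos f_inj D_hat; apply: strict.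
- exact: leaf_realization.
Qed.
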